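(* Let $L>0$, $N\ge1$, and let $x=(x_1,\dots,x_{2N})\in(\mathbb{R}_{>0})^{2N}$ satisfy the highest weight condition and $\sum_{i=1}^{2N}x_i\le L$. Let $u$, $(\mu^{(i)})_{1\le i\le u}$ and $(N^{(i)})_{1\le i\le u}$ be produced by Algorithm II started from $x^{(1)}=x$. Then $$\sum_{i=1}^{u}N^{(i)}\mu^{(i)}\le \frac{L}{2}.$$ Equivalently, the Young diagram having $\nu^{(i)}=N^{(i)}-N^{(i+1)}$ rows of length $\lambda^{(i)}=\sum_{l\le i}\mu^{(l)}$ ($1\le i\le u$, with $N^{(u+1)}=0$) has area at most $L/2$.
   Context: Highest weight condition: a sequence $x_1,\dots,x_{2n}$ of nonnegative reals satisfies it if $\sum_{i=1}^k(x_{2i-1}-x_{2i})\ge0$ for all $1\le k\le n$. Algorithm II. Set $N^{(1)}=N$, $x^{(1)}=x$. Given $x^{(i)}=(x^{(i)}_1,\dots,x^{(i)}_{2N^{(i)}})$ of positive reals satisfying the highest weight condition: let $\mu^{(i)}=\min_j x^{(i)}_j$ and $y^{(i)}_j=x^{(i)}_j-\mu^{(i)}$. In the (linear, non-cyclic) array $y^{(i)}_1,\dots,y^{(i)}_{2N^{(i)}}$ consider the maximal runs of consecutive zeros (a lone zero counts as a run); say there are $k^{(i)}$ runs with lengths $n^{(i)}_1,\dots,n^{(i)}_{k^{(i)}}$. Let $N^{(i+1)}=N^{(i)}-\sum_{j}\lceil n^{(i)}_j/2\rceil$. If $N^{(i+1)}=0$, stop and set $u=i$. Otherwise form $x^{(i+1)}$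 from $y^{(i)}$: (a) if a run of zeros is at the left end, delete it; (b) for every run of zeros lying between positive entries $a,b$, delete the zeros if the run length is even, and if odd delete the zeros and also replace $a,b$ by the single entry $a+b$; (c') if a run of zeros is at the right end, preceded by a positive entry $a$, delete the zeros, and if its length is odd also delete $a$. Repeat with $x^{(i+1)}$. *)

(* the statement is purely order-algebraic, stated over an
   arbitrary real field R (covers the reals). *)
From HB Require Import structures.
From mathcomp Require Import all_boot all_order all_algebra.
Set Implicit Arguments. Unset Strict Implicit. Unset Printing Implicit Defensive.
Import Order.TTheory GRing.Theory Num.Theory.
Local Open Scope ring_scope.

Section AlgII.
Variable R : realFieldType.

(* Highest weight condition for x = (x_1,...,x_{2n}) (0-indexed here):
   for all 1 <= k <= n, sum_{i=1}^k (x_{2i-1} - x_{2i}) >= 0. *)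
Definition highest_weight (x : seq R) : Prop :=
  forall k : nat, (1 <= k <= (size x)./2)%N ->
    0 <= \sum_(i < k) (x`_(i.*2) - x`_(i.*2.+1)).

Definition minseq (x : seq R) : R := foldr Num.min (head 0 x) x.

(* y^{(i)} = x^{(i)} - mu^{(i)} *)
Definition shifted (x : seq R) : seq R := [seq a - minseq x | a <- x].

(* decomposition of a sequence into positive entries and maximal runs of zeros *)
Inductive token := Pos of R | Zeros of nat.

Fixpoint tokens (y : seq R) : seq token :=
  match y with
  | [::] => [::]
  | a :: t =>
      let ts := tokens t in
      if a == 0 then
        match ts with
        | Zeros n :: ts' => Zeros n.+1 :: ts'
        | _ => Zeros 1 :: ts
        end
      else Pos a :: ts
  end.

Definition zero_runs (ts : seq token) : seq nat :=
  [seq (if t is Zeros n then n else 0%N) | t <- ts & if t is Zeros _ then true else false].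

Definition nextN (N : nat) (x : seq R) : nat :=
  (N - sumn [seq uphalf n | n <- zero_runs (tokens (shifted x))])%N.

(* rule (b): interior runs; acc is reversed output, merge = previous run was odd *)
Fixpoint interior (acc : seq R) (merge : bool) (ts : seq token) : seq R :=
  match ts with
  | [::] => rev acc
  | Pos a :: ts' =>
      if merge then
        match acc with
        | h :: t => interior ((h + a) :: t) false ts'
        | [::] => interior [:: a] false ts'
        end
      else interior (a :: acc) false ts'
  | Zeros n :: ts' => interior acc (odd n) ts'
  end.

Definition stepx (x : seq R) : seq R :=
  let ts := tokens (shifted x) in
  let ts1 := if ts is Zeros _ :: ts' then ts' else ts in
  let (ts2, oddr) :=
    match rev ts1 with
    | Zeros n :: r => (rev r, odd n)
    | _ => (ts1, false)
    end in
  let z := interior [::] false ts2 in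
  (* (c') an odd right-end run also deletes the preceding entry *)
  if oddr then take (size z).-1 z else z.

(* A run of Algorithm II of length u started from x^{(1)} = x, N^{(1)} = N:
   xs i = x^{(i)}, Ns i = N^{(i)} for 1 <= i <= u, and the algorithm stops
   exactly at step u (N^{(i+1)} <> 0 for i < u, N^{(u+1)} = 0). *)
Definition algII_run (N : nat) (x : seq R) (u : nat)
    (xs : nat -> seq R) (Ns : nat -> nat) : Prop :=
  [/\ (1 <= u)%N, xs 1%N = x, Ns 1%N = N,
      (forall i : nat, (1 <= i < u)%N ->
         [/\ Ns i.+1 = nextN (Ns i) (xs i), Ns i.+1 <> 0%N & xs i.+1 = stepx (xs i)])
    & nextN (Ns u) (xs u) = 0%N].

End AlgII.

From HB Require Import structures.
From mathcomp Require Import all_boot all_order all_algebra.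
From mathcomp Require Import lra zify.
Set Implicit Arguments. Unset Strict Implicit. Unset Printing Implicit Defensive.
Import Order.TTheory GRing.Theory Num.Theory.
Local Open Scope ring_scope.

(* Write |y| for the length and ||y|| for the sum of a word y, and D(y) for
   sum_j ceil(n_j/2) over the zero runs of y - min y, so that
   N^(i+1) = N^(i) - D(x^(i)).  One step of the algorithm satisfies
     (1) |x| <= |x'| + 2 D(x)          (each zero run of length n removes
                                        at most n + 1 entries, only when odd),
     (2) ||x'|| <= ||x|| - |x| * min x (subtracting the minimum, then only
                                        deleting or merging entries),
   where x' = stepx x, and x' stays nonnegative.  By (1) the inequality
   2 N^(i) <= |x^(i)| propagates along the run, hence by (2)
     2 N^(i) mu^(i) + ||x^(i+1)|| <= ||x^(i)||.
   Telescoping gives 2 sum_i N^(i) mu^(i) <= ||x|| <= L. *)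

Section TokenMeasures.
Variable R : realFieldType.

Definition nneg (s : seq R) : bool := all (fun a => 0 <= a) s.

Definition tok_len (t : token R) : nat := if t is Zeros n then n else 1%N.
Definition tok_def (t : token R) : nat := if t is Zeros n then uphalf n else 0%N.
Definition tok_val (t : token R) : R := if t is Pos a then a else 0.
Definition tok_nneg (t : token R) : bool := if t is Pos a then 0 <= a else true.

Definition toks_len (ts : seq (token R)) : nat := sumn (map tok_len ts).
Definition toks_def (ts : seq (token R)) : nat := sumn (map tok_def ts).
Definition toks_val (ts : seq (token R)) : R := \sum_(t <- ts) tok_val t.

Lemma toks_len_rcons ts t : toks_len (rcons ts t) = (toks_len ts + tok_len t)%N.
Proof. by rewrite /toks_len -cats1 map_cat sumn_cat /= addn0. Qed.

Lemma toks_def_rcons ts t : toks_def (rcons ts t) = (toks_def ts + tok_def t)%N.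
Proof. by rewrite /toks_def -cats1 map_cat sumn_cat /= addn0. Qed.

Lemma toks_val_rcons ts t : toks_val (rcons ts t) = toks_val ts + tok_val t.
Proof. by rewrite /toks_val -cats1 big_cat /= big_seq1. Qed.

Lemma sum_zero_runs ts : sumn [seq uphalf n | n <- zero_runs ts] = toks_def ts.
Proof. by elim: ts => [|[b|n] ts IH] //=; rewrite IH. Qed.

(* A run of n zeros removes at most n + 1 entries, and n + 1 only if n is odd. *)
Lemma zero_run_bound n : (n + odd n <= 2 * uphalf n)%N.
Proof. have := uphalf_half n; have := odd_double_half n; lia. Qed.

Lemma sum_nneg s : nneg s -> 0 <= \sum_(a <- s) a.
Proof. by move=> /allP s_ge0; rewrite big_seq sumr_ge0. Qed.

End TokenMeasures.

Section Tokenization.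
Variable R : realFieldType.

Lemma tokens_len (y : seq R) : toks_len (tokens y) = size y.
Proof.
elim: y => [|a y IH] //=; case: (a == 0); last by rewrite /toks_len /= -/(toks_len _) IH.
by move: IH; rewrite /toks_len; case: (tokens y) => [|[b|n] ts] /= IH; lia.
Qed.

Lemma tokens_val (y : seq R) : toks_val (tokens y) = \sum_(a <- y) a.
Proof.
elim: y => [|a y IH] /=; first by rewrite /toks_val !big_nil.
rewrite big_cons; case: eqP => [->|_]; last by rewrite /toks_val big_cons -/(toks_val _) IH.
move: IH; rewrite /toks_val; case: (tokens y) => [|[b|n] ts] /= IH;
  rewrite ?big_cons /= -?IH ?big_cons /= ?big_nil; lra.
Qed.

Lemma tokens_nneg (y : seq R) : nneg y -> all (@tok_nneg R) (tokens y).
Proof.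
elim: y => [|a y IH] //= /andP[a_ge0 /IH]; case: (a == 0) => /=; last by rewrite a_ge0.
by case: (tokens y) => [|[b|n] ts].
Qed.

End Tokenization.

Section Rules.
Variable R : realFieldType.
Implicit Types (ts : seq (token R)) (z acc : seq R).

(* Rule (b) loses a run of n zeros, plus one entry by merging when n is odd;
   [m] records a merge pending from the previous run, which costs one more. *)
Lemma interior_size acc (m : bool) ts :
  (size acc + toks_len ts <= size (interior acc m ts) + 2 * toks_def ts + m)%N.
Proof.
elim: ts acc m => [|[b|n] ts IH] acc m /=.
- by rewrite size_rev /toks_len /toks_def /=; lia.
- case: m; last by have := IH (b :: acc) false; rewrite /toks_len /toks_def /=; lia.
  case: acc => [|h t]; [have := IH [:: b] false | have := IH (h + b :: t) false];
  by rewrite /toks_len /toks_def /=; lia.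
- by have := IH acc (odd n); have := zero_run_bound n; rewrite /toks_len /toks_def /=; lia.
Qed.

Lemma interior_sum acc (m : bool) ts :
  \sum_(a <- interior acc m ts) a = \sum_(a <- acc) a + toks_val ts.
Proof.
elim: ts acc m => [|[b|n] ts IH] acc m /=.
- by rewrite big_rev /toks_val big_nil addr0.
- rewrite /toks_val big_cons /= -/(toks_val _).
  case: m; last by rewrite IH big_cons; lra.
  by case: acc => [|h t]; rewrite IH !big_cons ?big_nil; lra.
- by rewrite IH /toks_val big_cons /= add0r.
Qed.

Lemma interior_nneg acc (m : bool) ts :
  nneg acc -> all (@tok_nneg R) ts -> nneg (interior acc m ts).
Proof.
elim: ts acc m => [|[b|n] ts IH] acc m /=.
- by rewrite /nneg all_rev.
- move=> acc_ge0 /andP[b_ge0 ts_ge0]; case: m; last by apply: IH => //=; rewrite b_ge0.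
  case: acc acc_ge0 => [|h t] /= acc_ge0; apply: IH => //=; first by rewrite b_ge0.
  by case/andP: acc_ge0 => h_ge0 ->; rewrite addr_ge0.
- by move=> acc_ge0 ts_ge0; apply: IH.
Qed.

Definition trim_left ts : seq (token R) := if ts is Zeros _ :: ts' then ts' else ts.

Lemma trim_left_spec ts : all (@tok_nneg R) ts ->
  [/\ (toks_len ts + 2 * toks_def (trim_left ts)
        <= toks_len (trim_left ts) + 2 * toks_def ts)%N,
      toks_val (trim_left ts) = toks_val ts
    & all (@tok_nneg R) (trim_left ts)].
Proof.
case: ts => [|[b|n] ts] //= ts_ge0.
rewrite /toks_len /toks_def /toks_val big_cons /= add0r; split=> //.
by have := zero_run_bound n; lia.
Qed.

Definition finish ts : seq R :=
  let (ts2, oddr) :=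
    match rev ts with
    | Zeros n :: r => (rev r, odd n)
    | _ => (ts, false)
    end in
  let z := interior [::] false ts2 in
  if oddr then take (size z).-1 z else z.

Lemma stepxE (x : seq R) : stepx x = finish (trim_left (tokens (shifted x))).
Proof. by []. Qed.

Lemma drop_last_spec z : nneg z ->
  \sum_(a <- take (size z).-1 z) a <= \sum_(a <- z) a /\ nneg (take (size z).-1 z).
Proof.
set k := (size z).-1; rewrite -{1}(cat_take_drop k z) /nneg all_cat.
case/andP=> take_ge0 /sum_nneg drop_ge0; split=> //.
by rewrite -{2}(cat_take_drop k z) big_cat /=; lra.
Qed.

Lemma interior_spec ts : all (@tok_nneg R) ts ->
  let z := interior [::] false ts in
  [/\ (toks_len ts <= size z + 2 * toks_def ts)%N,
      \sum_(a <- z) a = toks_val ts & nneg z].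
Proof.
move=> ts_ge0 /=; rewrite interior_sum big_nil add0r interior_nneg //.
by split=> //; have := interior_size [::] false ts; rewrite /=; lia.
Qed.

(* Rule (c') loses a final run of n zeros and, when n is odd, one more entry,
   which is paid for by ceil(n/2); deleting it only lowers the sum. *)
Lemma finish_spec ts : all (@tok_nneg R) ts ->
  [/\ (toks_len ts <= size (finish ts) + 2 * toks_def ts)%N,
      \sum_(a <- finish ts) a <= toks_val ts & nneg (finish ts)].
Proof.
move=> ts_ge0; rewrite /finish.
case E: (rev ts) => [|[b|n] r]; rewrite ?E.
1,2: by have [? -> ?] := interior_spec ts_ge0.
have Ets : ts = rcons (rev r) (Zeros R n) by rewrite -[ts]revK E rev_cons.
have r_ge0 : all (@tok_nneg R) (rev r) by move: ts_ge0; rewrite Ets all_rcons.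
rewrite Ets toks_len_rcons toks_def_rcons toks_val_rcons /= addr0.
have [z_size z_sum z_ge0] := interior_spec r_ge0.
have := zero_run_bound n; case: (odd n) => /= n_bound; last by rewrite z_sum; split=> //; lia.
have [z'_sum z'_ge0] := drop_last_spec z_ge0.
split=> //; last by rewrite -z_sum.
by rewrite size_take; case: ltnP => _; lia.
Qed.

End Rules.

Section OneStep.
Variable R : realFieldType.
Implicit Types x : seq R.

Lemma minseq_le x a : a \in x -> minseq x <= a.
Proof.
rewrite /minseq; elim: x (head 0 x) => [|b x IH] h //=.
by rewrite in_cons => /orP[/eqP ->|a_in]; rewrite ge_min ?lexx // IH ?orbT.
Qed.

Lemma minseq_ge0 x : nneg x -> 0 <= minseq x.
Proof.
rewrite /minseq; case: x => [|b x] //= /andP[b_ge0 x_ge0].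
rewrite le_min b_ge0 /=; elim: x x_ge0 => [|c x IH] //= /andP[c_ge0 x_ge0].
by rewrite le_min c_ge0 IH.
Qed.

Lemma shifted_nneg x : nneg (shifted x).
Proof. by apply/allP => b /mapP[a a_in ->]; rewrite subr_ge0 minseq_le. Qed.

Lemma size_shifted x : size (shifted x) = size x.
Proof. exact: size_map. Qed.

Lemma sum_shifted x : \sum_(a <- shifted x) a = \sum_(a <- x) a - (size x)%:R * minseq x.
Proof.
rewrite /shifted; elim: x (minseq x) => [|a x IH] m; first by rewrite !big_nil mul0r subr0.
by rewrite /= !big_cons IH -addn1 natrD; lra.
Qed.

Definition removed x : nat := sumn [seq uphalf n | n <- zero_runs (tokens (shifted x))].

Lemma step_spec x :
  [/\ (size x <= size (stepx x) + 2 * removed x)%N,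
      \sum_(a <- stepx x) a <= \sum_(a <- x) a - (size x)%:R * minseq x
    & nneg (stepx x)].
Proof.
have [left_len left_val left_ge0] := trim_left_spec (tokens_nneg (shifted_nneg x)).
have [fin_len fin_val fin_ge0] := finish_spec left_ge0.
rewrite stepxE /removed sum_zero_runs; split=> //.
- by move: fin_len left_len; rewrite tokens_len size_shifted; lia.
- by apply: (le_trans fin_val); rewrite left_val tokens_val sum_shifted.
Qed.

Lemma nextN_size N x : (N.*2 <= size x)%N -> ((nextN N x).*2 <= size (stepx x))%N.
Proof. by have [+ _ _] := step_spec x; rewrite /nextN -/(removed x); lia. Qed.

Lemma step_area N x : nneg x -> (N.*2 <= size x)%N ->
  2%:R * ((N%:R) * minseq x) + \sum_(a <- stepx x) a <= \sum_(a <- x) a.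
Proof.
move=> x_ge0 N_size; have [_ x'_sum _] := step_spec x.
have : (N.*2)%:R * minseq x <= (size x)%:R * minseq x.
  by rewrite ler_wpM2r ?minseq_ge0 ?ler_nat.
by rewrite -mul2n natrM; lra.
Qed.

End OneStep.

Lemma run_invariant (R : realFieldType) (N : nat) (x : seq R) (u : nat)
    (xs : nat -> seq R) (Ns : nat -> nat) :
  size x = N.*2 -> nneg x -> algII_run N x u xs Ns ->
  forall k, (1 <= k <= u)%N ->
  [/\ nneg (xs k), ((Ns k).*2 <= size (xs k))%N &
      2%:R * \sum_(1 <= i < k) (Ns i)%:R * minseq (xs i) + \sum_(a <- xs k) a
        <= \sum_(a <- x) a].
Proof.
move=> x_size x_ge0 [u_ge1 xs1 Ns1 run_step _].
elim=> [|[|k] IH] // k_range.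
  by rewrite xs1 Ns1 big_geq // x_size; split=> //; lra.
have [xk_ge0 Nk_size area_k] := IH (ltac:(lia)).
have [-> _ ->] := run_step k.+1 (ltac:(lia)).
have [_ _ ->] := step_spec (xs k.+1).
have := step_area xk_ge0 Nk_size.
by rewrite big_nat_recr //= nextN_size //; split=> //; lra.
Qed.

Theorem mainTheorem9 (R : realFieldType) (L : R) (N : nat) (x : seq R)
    (u : nat) (xs : nat -> seq R) (Ns : nat -> nat) :
  0 < L -> (1 <= N)%N -> size x = N.*2 -> all (fun a => 0 < a) x ->
  highest_weight x -> \sum_(a <- x) a <= L ->
  algII_run N x u xs Ns ->
  \sum_(1 <= i < u.+1) (Ns i)%:R * minseq (xs i) <= L / 2%:R.
Proof.
move=> _ _ x_size x_pos _ mass_le_L run.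
have x_ge0 : nneg x by apply/allP => a /(allP x_pos) /ltW.
have u_ge1 : (1 <= u)%N by case: run.
have u_range : (1 <= u <= u)%N by rewrite u_ge1 leqnn.
have [xu_ge0 Nu_size area_u] := run_invariant x_size x_ge0 run u_range.
have := step_area xu_ge0 Nu_size.
have [_ _ /sum_nneg x'_ge0] := step_spec (xs u).
by rewrite big_nat_recr //=; lra.
Qed.
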